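(* Let $X$ be a finite simple graph, $\pi\in S_X$, and $\phi\in\{\mathbf{F}^\updownarrow_\pi,\mathbf{F}^\uparrow_\pi,\mathbf{F}^\downarrow_\pi\}$. If for a state $s\in\mathcal{S}$ the transition $s\mapsto\phi(s)$ is unidirectional, then every transition $\phi^t(s)\mapsto\phi^{t+1}(s)$, $t\ge 0$, along the forward orbit of $s$ is unidirectional and in the same direction as that of $s\mapsto\phi(s)$.
   Context: Let $X$ be a finite simple graph with vertices $1,\dots,n$; $d(v)$ is the degree of $v$ and $n[v]$ the closed neighborhood of $v$. An extended vertex state is $s_v=(x_v,k_v)\in\{0,1\}\times\{1,\dots,d(v)+1\}$; $\mathcal{S}$ is the product of these sets. Let $\sigma(x[v])=|\{u\in n[v]:x_u=1\}|$. All vertex functions set $x_v'=1$ iff $\sigma(x[v])\ge k_v$ (else $0$). Increasing ($\uparrow$): $k_v'=k_v+1$ if $x_v=0$ and $\sigma(x[v])\ge k_v$, else $k_v$. Decreasing ($\downarrow$): $k_v'=k_v-1$ if $x_v=1$ and $\sigma(x[v])<k_v$, else $k_v$. Mixed ($\updownarrow$): both of these changes, $k_v$ unchanged otherwise. The local map $F^\star_v$ updates only coordinate $v$; for a permutation $\pi=(\pi_1,\dots,\pi_n)$, $\mathbf{F}^\star_\pi=F^\star_{\pi_n}\circ\cdots\circ F^\star_{\pi_1}$. A transition $(x,k)\mapsto(x',k')$ is unidirectional if either all vertices $v$ with $x_v\ne x'_v$ satisfy $x_v=0,x_v'=1$, or all such vertices satisfy $x_v=1,x_v'=0$. *)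

From mathcomp Require Import all_boot all_fingroup.
Set Implicit Arguments. Unset Strict Implicit. Unset Printing Implicit Defensive.

Definition simple_graph (n : nat) (e : rel 'I_n) : Prop :=
  symmetric e /\ irreflexive e.

Definition deg n (e : rel 'I_n) (v : 'I_n) : nat := #|[set u | e v u]|.

(* extended state: s v = (x_v, k_v) *)
Definition state n := 'I_n -> bool * nat.

Definition valid_state n (e : rel 'I_n) (s : state n) : Prop :=
  forall v, 1 <= (s v).2 <= deg e v + 1.

Definition sigma n (e : rel 'I_n) (s : state n) (v : 'I_n) : nat :=
  #|[set u | ((u == v) || e v u) && (s u).1]|.

Inductive mode := Mixed | Increasing | Decreasing.

Definition vertex_fun n (e : rel 'I_n) (m : mode) (s : state n) (v : 'I_n)
  : bool * nat :=
  let x := (s v).1 in let k := (s v).2 in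
  let sg := sigma e s v in
  let x' := k <= sg in
  let inc := ~~ x && (k <= sg) in
  let dec := x && (sg < k) in
  let k' := match m with
            | Increasing => if inc then k.+1 else k
            | Decreasing => if dec then k.-1 else k
            | Mixed => if inc then k.+1 else if dec then k.-1 else k
            end in
  (x', k').

Definition local_map n (e : rel 'I_n) (m : mode) (v : 'I_n) (s : state n)
  : state n :=
  fun u => if u == v then vertex_fun e m s v else s u.

(* F_pi = F_{pi_n} o ... o F_{pi_1} : apply F_{pi 0} first *)
Definition seq_map n (e : rel 'I_n) (m : mode) (pi : 'S_n) (s : state n)
  : state n :=
  foldl (fun s' v => local_map e m v s') s [seq pi i | i <- enum 'I_n].

Definition up_trans n (s s' : state n) : Prop :=
  forall v, (s v).1 != (s' v).1 -> ~~ (s v).1 && (s' v).1.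
Definition down_trans n (s s' : state n) : Prop :=
  forall v, (s v).1 != (s' v).1 -> (s v).1 && ~~ (s' v).1.
Definition unidirectional n (s s' : state n) : Prop :=
  up_trans s s' \/ down_trans s s'.

From mathcomp Require Import all_boot all_fingroup.
From mathcomp Require Import zify.
Set Implicit Arguments. Unset Strict Implicit. Unset Printing Implicit Defensive.

(* A sequential sweep updates each vertex v from a state that is already new
   on the vertices preceding v and still old on the others. If one sweep
   changes the activity bits x monotonically (say upwards), compare the
   inputs seen by v in two consecutive sweeps: by induction along the update
   order they are ordered the same way, so sigma can only grow, and it grows
   by one exactly when v itself has just switched on, which is when the
   threshold k_v may have been raised by one. Hence x_v cannot switch off in
   the next sweep. The downward case is dual, using that k_v is lowered by at
   most one and only when v switches off. *)

Definition xrel n (r : rel bool) (s s' : state n) : Prop :=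
  forall u, r (s u).1 (s' u).1.

Lemma up_transE n (s s' : state n) : up_trans s s' <-> xrel implb s s'.
Proof.
split=> H u; move: (H u); by case: (s u).1; case: (s' u).1 => //; apply.
Qed.

Lemma down_transE n (s s' : state n) :
  down_trans s s' <-> xrel (fun a b => b ==> a) s s'.
Proof.
split=> H u; move: (H u); by case: (s u).1; case: (s' u).1 => //; apply.
Qed.

Section VertexFunction.
Variables (n : nat) (e : rel 'I_n) (m : mode).

Lemma vertex_fun_ext s s' v : (forall u, s u = s' u) ->
  vertex_fun e m s v = vertex_fun e m s' v.
Proof.
move=> ss'; have sg : sigma e s v = sigma e s' v.
  by apply: eq_card => u; rewrite !inE ss'.
by rewrite /vertex_fun sg ss'.
Qed.

Lemma vertex_fun_x s v : (vertex_fun e m s v).1 = ((s v).2 <= sigma e s v).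
Proof. by []. Qed.

Lemma vertex_fun_k_le s v : (vertex_fun e m s v).2 <= (s v).2 + ~~ (s v).1.
Proof.
rewrite /vertex_fun; case: m; case: (s v).1 => /=; do ?case: ifP; lia.
Qed.

Lemma vertex_fun_k_ge s v : (s v).2 <= (vertex_fun e m s v).2 + (s v).1.
Proof.
rewrite /vertex_fun; case: m; case: (s v).1 => /=; do ?case: ifP; lia.
Qed.

Lemma sigma_le s s' v : xrel implb s s' ->
  sigma e s v + (~~ (s v).1 && (s' v).1) <= sigma e s' v.
Proof.
move=> ss'.
have sub : [set u | ((u == v) || e v u) && (s u).1] \subset
           [set u | ((u == v) || e v u) && (s' u).1].
  by apply/subsetP => u; rewrite !inE => /andP[-> /(implyP (ss' u))].
case: (boolP (~~ (s v).1 && (s' v).1)) => [/andP[xv x'v] | _].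
  rewrite addn1; apply: proper_card; apply/properP; split=> //.
  by exists v; rewrite !inE eqxx /= ?x'v ?(negbTE xv).
by rewrite addn0; apply: subset_leq_card.
Qed.

Lemma vertex_fun_up s s' v : s' v = vertex_fun e m s v ->
  xrel implb s s' -> (s' v).1 ==> (vertex_fun e m s' v).1.
Proof.
move=> s'v ss'; apply/implyP => x'v; rewrite vertex_fun_x.
have := sigma_le v ss'; rewrite x'v.
have := vertex_fun_k_le s v; move: x'v.
by rewrite s'v vertex_fun_x; lia.
Qed.

Lemma vertex_fun_down s s' v : s' v = vertex_fun e m s v ->
  xrel (fun a b => b ==> a) s s' -> (vertex_fun e m s' v).1 ==> (s' v).1.
Proof.
move=> s'v s's; rewrite vertex_fun_x; apply/implyP => k'_le.
apply/negPn/negP => x'v; have := @sigma_le s' s v s's; rewrite (negbTE x'v).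
have := vertex_fun_k_ge s v; move: x'v k'_le.
by rewrite s'v vertex_fun_x; lia.
Qed.

End VertexFunction.

Definition sweep n (e : rel 'I_n) (m : mode) (l : seq 'I_n) (s : state n) :=
  foldl (fun s' v => local_map e m v s') s l.

Section Sweep.
Variables (n : nat) (e : rel 'I_n) (m : mode).

Lemma sweep_notin l s v : v \notin l -> sweep e m l s v = s v.
Proof.
elim: l s => [|a l IH] s //=; rewrite in_cons negb_or => /andP[va vl].
by rewrite IH // /local_map (negbTE va).
Qed.

Lemma sweepE l s v : uniq l -> v \in l ->
  sweep e m l s v = vertex_fun e m
    (fun u => if index u l < index v l then sweep e m l s u else s u) v.
Proof.
elim: l s => [|a l IH] s // /andP[al ul].
rewrite [sweep _ _ _ _]/= in_cons => /orP[/eqP-> | vl].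
  rewrite sweep_notin // /local_map eqxx; apply: vertex_fun_ext => u.
  by rewrite /= eqxx ltn0.
have av : a != v by apply: contraNneq al => ->.
rewrite IH //; apply: vertex_fun_ext => u /=.
rewrite (negbTE av) ltnS; case: (eqVneq a u) => [<- | au].
  by rewrite (memNindex al) ltnNge ltnW ?index_mem //= sweep_notin.
by rewrite /local_map eq_sym (negbTE au).
Qed.

Variables (r : rel bool) (l : seq 'I_n).
Hypotheses (l_uniq : uniq l) (l_all : forall v, v \in l).
Hypothesis vertex_fun_r : forall s s' v, s' v = vertex_fun e m s v ->
  xrel r s s' -> r (s' v).1 (vertex_fun e m s' v).1.

Lemma sweep_xrel s : xrel r s (sweep e m l s) ->
  xrel r (sweep e m l s) (sweep e m l (sweep e m l s)).
Proof.
set s1 := sweep e m l s => ss1.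
suff H i v : index v l = i -> r (s1 v).1 (sweep e m l s1 v).1.
  by move=> v; apply: H.
elim/ltn_ind: i v => i IH v vi; subst i.
pose mid u := if index u l < index v l then sweep e m l s1 u else s1 u.
have -> : sweep e m l s1 v = vertex_fun e m mid v by exact: sweepE.
have -> : s1 v = mid v by rewrite /mid ltnn.
apply: vertex_fun_r => [|u]; rewrite /mid.
  by rewrite ltnn; apply: sweepE.
rewrite /= -/s1; case: ifP => [lt_uv | _]; last exact: ss1.
exact: IH lt_uv u erefl.
Qed.

End Sweep.

Lemma xrel_iter_sweep n (e : rel 'I_n) (m : mode) (pi : 'S_n) (r : rel bool)
  (s : state n) :
  (forall s s' v, s' v = vertex_fun e m s v ->
     xrel r s s' -> r (s' v).1 (vertex_fun e m s' v).1) ->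
  xrel r s (seq_map e m pi s) ->
  forall t, xrel r (iter t (seq_map e m pi) s) (iter t.+1 (seq_map e m pi) s).
Proof.
move=> vertex_fun_r ss1; elim=> [|t IH] //=.
apply: (@sweep_xrel _ _ _ _ [seq pi i | i <- enum 'I_n]) IH => //.
  by rewrite map_inj_uniq ?enum_uniq //; apply: perm_inj.
by move=> v; apply/mapP; exists (pi^-1 v)%g; rewrite ?mem_enum ?permKV.
Qed.

Theorem proposition3p9 (n : nat) (e : rel 'I_n) (pi : 'S_n) (m : mode)
  (s : state n) :
  simple_graph e -> valid_state e s ->
  unidirectional s (seq_map e m pi s) ->
  (up_trans s (seq_map e m pi s) ->
     forall t, up_trans (iter t (seq_map e m pi) s)
                        (iter t.+1 (seq_map e m pi) s)) /\
  (down_trans s (seq_map e m pi s) ->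
     forall t, down_trans (iter t (seq_map e m pi) s)
                          (iter t.+1 (seq_map e m pi) s)).
Proof.
move=> _ _ _; split=> [/up_transE up t | /down_transE down t].
  by apply/up_transE; apply: xrel_iter_sweep up t; apply: vertex_fun_up.
by apply/down_transE; apply: xrel_iter_sweep down t; apply: vertex_fun_down.
Qed.
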